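(* Let $M$ be an $L$-structure, $G$ a group definable in $M$, and assume every complete type in $S_{G}(M)$ is definable. Then $(S_{G}(M),G,\mathrm{tp}(1/M))$, with the action $g\cdot\mathrm{tp}(a/M)=\mathrm{tp}(ga/M)$ and distinguished point the type of the identity $1$ of $G$, is the unique universal definable $G$-ambit: for any definable $G$-ambit $(X,G,x_{0})$ there is a unique continuous $G$-equivariant map $h\colon S_{G}(M)\to X$ with $h(\mathrm{tp}(1/M))=x_{0}$, and this map is necessarily surjective.
   Context: $M^{*}$ is a $\kappa$-saturated elementary extension of $M$ with $\kappa>2^{|M|+|L|}$ and $G^{*}$ the interpretation of $G$ in it; $S_{G}(M)$ is the Stone space of complete types over $M$ containing the formula defining $G$ (elements $g\in G$ are identified with the realized types $\mathrm{tp}(g/M)$). A type $p\in S(M)$ is definable if for every $L$-formula $\varphi(x,y)$, $\{b\in M:\varphi(x,b)\in p\}$ is definable in $M$. For a compact Hausdorff space $C$, a map $f\colon G\to C$ is definable if for any disjoint closed $C_{1},C_{2}\subseteq C$ there is a set $Y'\subseteq G$ definable in $M$ (with parameters) with $f^{-1}(C_{1})\subseteq Y'$ and $Y'\cap f^{-1}(C_{2})=\emptyset$. A definable $G$-flow is a compact Hausdorff space $X$ with an action of $G$ by homeomorphisms such that for each $x\in X$ the map $g\mapsto g\cdot x$ from $G$ to $X$ is definable. A definable $G$-ambit $(X,G,x_{0})$ is a definable $G$-flow with a point $x_{0}\in X$ whose orbit $G\cdot x_{0}$ is dense in $X$. *)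

From HB Require Import structures.
From mathcomp Require Import all_boot.
From mathcomp Require Import boolp classical_sets topology.
Set Implicit Arguments. Unset Strict Implicit. Unset Printing Implicit Defensive.
Local Open Scope classical_set_scope.

Record signature := Signature {
  fsym : Type; farity : fsym -> nat;
  rsym : Type; rarity : rsym -> nat }.

Record structure (L : signature) := Structure {
  carrier :> Type;
  funI : forall f : fsym L, ('I_(farity f) -> carrier) -> carrier;
  relI : forall r : rsym L, ('I_(rarity r) -> carrier) -> Prop }.

Section Syntax.
Variable L : signature.

(* variables are de Bruijn indices *)
Inductive term : Type :=
  | Var of nat
  | App (f : fsym L) of ('I_(farity f) -> term).

Inductive formula : Type :=
  | FEq of term & term
  | FRel (r : rsym L) of ('I_(rarity r) -> term)
  | FNeg of formula
  | FAnd of formula & formula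
  | FEx of formula.

(* a strict upper bound on the (free) variables of a term / formula *)
Fixpoint tbound (t : term) : nat :=
  match t with
  | Var i => i.+1
  | App f a => \max_(i < farity f) tbound (a i)
  end.

Fixpoint fbound (phi : formula) : nat :=
  match phi with
  | FEq t u => maxn (tbound t) (tbound u)
  | FRel r a => \max_(i < rarity r) tbound (a i)
  | FNeg p => fbound p
  | FAnd p q => maxn (fbound p) (fbound q)
  | FEx p => (fbound p).-1
  end.

Variable M : structure L.

Definition scons (a : M) (e : nat -> M) : nat -> M :=
  fun i => if i is j.+1 then e j else a.

Fixpoint teval (e : nat -> M) (t : term) : M :=
  match t with
  | Var i => e i
  | App f a => @funI L M f (fun i => teval e (a i))
  end.

Fixpoint sat (e : nat -> M) (phi : formula) : Prop :=
  match phi with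
  | FEq t u => teval e t = teval e u
  | FRel r a => @relI L M r (fun i => teval e (a i))
  | FNeg p => ~ sat e p
  | FAnd p q => sat e p /\ sat e q
  | FEx p => exists a : M, sat (scons a e) p
  end.

Definition cat_env n (v : 'I_n -> M) (e : nat -> M) : nat -> M :=
  fun i => match (insub i : option 'I_n) with
           | Some o => v o
           | None => e (i - n)
           end.

Definition definable n (D : set ('I_n -> M)) : Prop :=
  exists (phi : formula) (c : nat -> M),
    forall v, D v <-> sat (cat_env v c) phi.

End Syntax.

Section Types.
Variables (L : signature) (M : structure L) (k : nat) (Gset : set ('I_k -> M)).

(* a complete type over M in the variables x = (x_0..x_{k-1}), identified with
   the set {phi(M) : phi(x) in p} of M-definable subsets of M^k it contains *)
Definition is_complete_type (p : set (set ('I_k -> M))) : Prop :=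
  (forall D, p D -> definable D) /\
  [/\ p setT, ~ p set0,
      (forall D E, p D -> p E -> p (D `&` E)),
      (forall D E, p D -> definable E -> D `<=` E -> p E) &
      (forall D, definable D -> p D \/ p (~` D))].

Definition is_SG (p : set (set ('I_k -> M))) : Prop :=
  is_complete_type p /\ p Gset.

Record SG : Type := mkSG { sgval : set (set ('I_k -> M)); sgvalP : is_SG sgval }.

HB.instance Definition _ := gen_eqMixin SG.
HB.instance Definition _ := gen_choiceMixin SG.

(* Stone topology: generated by the basic clopen sets [phi] = {p | phi in p} *)
Definition stone_basic (D : set ('I_k -> M)) : set SG := fun p => sgval p D.

HB.instance Definition _ := isSubBaseTopological.Build SG
  (@definable L M k) stone_basic.

Definition tp (a : 'I_k -> M) : set (set ('I_k -> M)) :=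
  fun D => definable D /\ D a.

(* p is a definable type: for every L-formula phi(x,y) (free variables among
   x_0..x_{k-1}, y_0..y_{n-1}), {b in M^n | phi(x,b) in p} is definable *)
Definition definable_type (p : set (set ('I_k -> M))) : Prop :=
  forall (n : nat) (phi : formula L) (tail : nat -> M),
    fbound phi <= k + n ->
    definable (fun b : 'I_n -> M =>
      p (fun a : 'I_k -> M => sat (cat_env a (cat_env b tail)) phi)).

End Types.

Section Groups.
Variables (L : signature) (M : structure L) (k : nat) (Gset : set ('I_k -> M)).

Definition Gty : Type := {a : 'I_k -> M | Gset a}.

Variables (mul : Gty -> Gty -> Gty) (one : Gty).

Definition is_definable_group : Prop :=
  [/\ definable Gset,
      (exists (phi : formula L) (c : nat -> M), forall a b d : Gty,
          mul a b = d <->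
          sat (cat_env (sval a) (cat_env (sval b) (cat_env (sval d) c))) phi),
      associative mul,
      left_id one mul &
      (forall g, exists h, mul h g = one)].

(* left translation of types: g . tp(a/M) = tp(g a/M) *)
Definition shift_type (g : Gty) (p : set (set ('I_k -> M))) :
    set (set ('I_k -> M)) :=
  fun D => definable D /\
    p (fun a => exists Ha : Gset a, D (sval (mul g (exist _ a Ha)))).

(* the action on S_G(M) (the fallback branch never occurs, cf. the theorem) *)
Definition act_SG (g : Gty) (q : SG Gset) : SG Gset :=
  match pselect (is_SG Gset (shift_type g (sgval q))) with
  | left H => mkSG H
  | right _ => q
  end.

Definition definable_map (X : topologicalType) (f : Gty -> X) : Prop :=
  forall C1 C2 : set X, closed C1 -> closed C2 -> C1 `&` C2 = set0 ->
    exists Y : set ('I_k -> M),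
      [/\ definable Y, Y `<=` Gset,
          (forall g, C1 (f g) -> Y (sval g)) &
          (forall g, Y (sval g) -> ~ C2 (f g))].

Definition definable_flow (X : topologicalType) (act : Gty -> X -> X) : Prop :=
  [/\ hausdorff_space X, compact [set: X] &
      (forall x, act one x = x)] /\
  [/\ (forall g h x, act (mul g h) x = act g (act h x)),
      (forall g, continuous (act g) /\
         exists ginv : X -> X, [/\ continuous ginv, cancel (act g) ginv &
                                   cancel ginv (act g)]) &
      (forall x, definable_map (fun g => act g x))].

Definition definable_ambit (X : topologicalType) (act : Gty -> X -> X) (x0 : X)
  : Prop :=
  definable_flow act /\ closure (range (fun g => act g x0)) = [set: X].

End Groups.

From HB Require Import structures.
From mathcomp Require Import all_boot.
From mathcomp Require Import boolp classical_sets topology.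
From mathcomp Require Import zify.
Local Open Scope classical_set_scope.
Set Implicit Arguments. Unset Strict Implicit. Unset Printing Implicit Defensive.

(* The universal map sends a type [q] to the unique point [h q] lying in the
   closure of [D x0 = {g x0 | g in D}] for every [D] in [q].  Such a point exists
   by compactness of [X]; it is unique, and [h] is continuous, because [X] is
   regular and the orbit map [g |-> g x0] is definable: every neighbourhood of
   [h q] contains the closure of [D x0] for some [D] in [q].  Equivariance is
   immediate, the realized types [tp(g/M) = g tp(1/M)] are dense, which forces
   uniqueness, and compactness of [S_G(M)] gives surjectivity.  Conversely,
   [S_G(M)] is a definable ambit: disjoint closed sets of types are separated by
   a basic clopen [[D]], and [{g | D in g p} = {g | g^-1 D in p}] is definable
   exactly because [p] is a definable type. *)

Section Renaming.
Variable L : signature.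
Implicit Types (t : term L) (phi : formula L).

Fixpoint trename (s : nat -> nat) t : term L :=
  match t with
  | Var i => Var L (s i)
  | App f a => App (fun i => trename s (a i))
  end.

Definition up_ren (s : nat -> nat) : nat -> nat :=
  fun i => if i is j.+1 then (s j).+1 else 0.

Fixpoint frename (s : nat -> nat) phi : formula L :=
  match phi with
  | FEq t u => FEq (trename s t) (trename s u)
  | FRel r a => FRel (fun i => trename s (a i))
  | FNeg p => FNeg (frename s p)
  | FAnd p q => FAnd (frename s p) (frename s q)
  | FEx p => FEx (frename (up_ren s) p)
  end.

Lemma tbound_rename s B t : (forall i, s i < B) -> tbound (trename s t) <= B.
Proof.
move=> sB; elim: t => [i|f a IH] /=; first exact: sB.
by apply/bigmax_leqP => i _; apply: IH.
Qed.

Lemma fbound_rename phi s B : (forall i, s i < B) -> fbound (frename s phi) <= B.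
Proof.
elim: phi s B => [t u|r a|p IH|p IHp q IHq|p IH] s B sB /=.
- by rewrite geq_max !tbound_rename.
- by apply/bigmax_leqP => i _; apply: tbound_rename.
- exact: IH.
- by rewrite geq_max IHp ?IHq.
- suff : fbound (frename (up_ren s) p) <= B.+1 by lia.
  by apply: IH => -[|j] //=; rewrite ltnS.
Qed.

Variable M : structure L.

Lemma teval_rename (e : nat -> M) s t : teval e (trename s t) = teval (e \o s) t.
Proof.
elim: t => [i|f a IH] //=.
by congr (funI _); apply: funext => i; apply: IH.
Qed.

Lemma sat_rename phi s (e : nat -> M) : sat e (frename s phi) = sat (e \o s) phi.
Proof.
elim: phi s e => [t u|r a|p IH|p IHp q IHq|p IH] s e /=.
- by rewrite !teval_rename.
- by congr (relI _); apply: funext => i; rewrite teval_rename.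
- by rewrite IH.
- by rewrite IHp IHq.
- have up_scons a : scons a e \o up_ren s = scons a (e \o s).
    by apply: funext => -[|i].
  by apply: propext; split=> -[a Ha]; exists a; move: Ha; rewrite IH up_scons.
Qed.

Lemma teval_eq_on (e e' : nat -> M) t :
  (forall i, i < tbound t -> e i = e' i) -> teval e t = teval e' t.
Proof.
elim: t => [i|f a IH] /= ee'; first exact: ee'.
congr (funI _); apply: funext => i; apply: IH => j ltj; apply: ee'.
exact: leq_trans ltj (leq_bigmax _).
Qed.

Lemma sat_eq_on phi (e e' : nat -> M) :
  (forall i, i < fbound phi -> e i = e' i) -> sat e phi = sat e' phi.
Proof.
elim: phi e e' => [t u|r a|p IH|p IHp q IHq|p IH] e e' /= ee'.
- by rewrite (@teval_eq_on e e' t) ?(@teval_eq_on e e' u) // => i lti;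
    apply: ee'; lia.
- congr (relI _); apply: funext => i; apply: teval_eq_on => j ltj; apply: ee'.
  exact: leq_trans ltj (leq_bigmax _).
- by rewrite (IH e e').
- by rewrite (IHp e e') ?(IHq e e') // => i lti; apply: ee'; lia.
- have scons_eq a : sat (scons a e) p = sat (scons a e') p.
    by apply: IH => -[|i] //= lti; apply: ee'; lia.
  by apply: propext; split=> -[a Ha]; exists a; rewrite scons_eq in Ha *.
Qed.

End Renaming.

(** * Definable predicates on environments *)

Definition splice (T : Type) (n : nat) (a b : nat -> T) : nat -> T :=
  fun i => if i < n then a i else b (i - n).

Lemma splice0 (T : Type) (a b : nat -> T) : splice 0 a b = b.
Proof. by apply: funext => i; rewrite /splice subn0. Qed.

Lemma parityP i : {j | i = j.*2} + {j | i = j.*2.+1}.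
Proof.
case: (boolP (odd i)) => oi; [right|left]; exists i./2.
  by rewrite -[LHS](odd_double_half i) oi add1n.
by rewrite -[LHS](odd_double_half i) (negbTE oi) add0n.
Qed.

Ltac parity_simpl := rewrite /= ?odd_double ?doubleK ?uphalf_double /=.

Section EnvDefinability.
Variables (L : signature) (M : structure L) (m0 : M).

(* Even positions carry the environment, odd positions the parameters. *)
Definition interleave (e c : nat -> M) : nat -> M :=
  fun i => if odd i then c i./2 else e i./2.

Lemma interleave_even e c j : interleave e c j.*2 = e j.
Proof. by rewrite /interleave; parity_simpl. Qed.

Lemma interleave_odd e c j : interleave e c j.*2.+1 = c j.
Proof. by rewrite /interleave; parity_simpl. Qed.

Ltac interleave_simpl := parity_simpl;
  repeat first [rewrite interleave_even | rewrite interleave_odd].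

Definition definable_env (P : (nat -> M) -> Prop) : Prop :=
  exists (phi : formula L) (c : nat -> M), forall e, P e = sat (interleave e c) phi.

Lemma eq_definable_env P Q : (forall e, P e = Q e) -> definable_env P -> definable_env Q.
Proof. by move=> PQ [phi [c Hc]]; exists phi, c => e; rewrite -PQ. Qed.

Lemma definable_env_reparam (P : (nat -> M) -> Prop) phi c c' s :
  (forall e, P e = sat (interleave e c) phi) ->
  (forall e, interleave e c = interleave e c' \o s) ->
  forall e, P e = sat (interleave e c') (frename s phi).
Proof. by move=> Pphi cc' e; rewrite Pphi cc' sat_rename. Qed.

Lemma definable_envT : definable_env (fun _ => True).
Proof.
exists (FEq (Var L 0) (Var L 0)), (fun _ => m0) => e /=.
by apply: propext.
Qed.

Lemma definable_envN P : definable_env P -> definable_env (fun e => ~ P e).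
Proof. by move=> [phi [c Pphi]]; exists (FNeg phi), c => e /=; rewrite Pphi. Qed.

(* The two parameter sequences are pooled into [interleave c d]: parameter [j]
   of [P] (of [Q]) sits at index [2j] (at index [2j+1]) of the pool. *)
Lemma definable_envI P Q :
  definable_env P -> definable_env Q -> definable_env (fun e => P e /\ Q e).
Proof.
move=> [phi [c Pphi]] [psi [d Qpsi]].
pose s1 i := if odd i then (i./2).*2.*2.+1 else i.
pose s2 i := if odd i then ((i./2).*2.+1).*2.+1 else i.
exists (FAnd (frename s1 phi) (frename s2 psi)), (interleave c d) => e /=.
rewrite (definable_env_reparam (c' := interleave c d) (s := s1) Pphi)
  ?(definable_env_reparam (c' := interleave c d) (s := s2) Qpsi) //.
  by move=> e'; apply: funext => i /=; case: (parityP i) => -[j ->];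
    rewrite /s2; interleave_simpl.
by move=> e'; apply: funext => i /=; case: (parityP i) => -[j ->];
  rewrite /s1; interleave_simpl.
Qed.

Lemma definable_env_ex P :
  definable_env P -> definable_env (fun e => exists a, P (scons a e)).
Proof.
move=> [phi [c Pphi]].
pose s i := if odd i then (i./2).*2.+2 else if i./2 is j.+1 then j.*2.+1 else 0.
exists (FEx (frename s phi)), c => e /=.
have scons_interleave a : interleave (scons a e) c = scons a (interleave e c) \o s.
  apply: funext => i /=; case: (parityP i) => -[j ->]; rewrite /s; interleave_simpl => //.
  by case: j => [|j] //=; interleave_simpl.
by apply: propext; split=> -[a Ha]; exists a; move: Ha;
  rewrite Pphi scons_interleave sat_rename.
Qed.

Lemma definable_env_subst P (s : nat -> option nat) (v : nat -> M) :
  definable_env P ->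
  definable_env (fun e => P (fun i => if s i is Some j then e j else v i)).
Proof.
move=> [phi [c Pphi]].
pose sg i := if odd i then ((i./2).*2.+1).*2.+1
             else if s i./2 is Some j then j.*2 else (i./2).*2.*2.+1.
exists (frename sg phi), (interleave v c) => e; rewrite Pphi sat_rename; congr sat.
apply: funext => i /=; case: (parityP i) => -[j ->]; rewrite /sg; interleave_simpl => //.
by case: (s j) => [j'|]; interleave_simpl.
Qed.

Lemma definable_env_sat_splice n (c : nat -> M) phi :
  definable_env (fun e => sat (splice n e c) phi).
Proof.
pose s i := if i < n then i.*2 else (i - n).*2.+1.
exists (frename s phi), c => e; rewrite sat_rename; congr sat.
by apply: funext => i; rewrite /splice /s /=; case: ifP; interleave_simpl.
Qed.

Lemma definable_env_exn n P :
  definable_env P -> definable_env (fun e => exists z : nat -> M, P (splice n z e)).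
Proof.
elim: n P => [|n IH] P Pdef.
  apply: eq_definable_env Pdef => e; apply: propext; split.
    by move=> Pe; exists (fun _ => m0); rewrite splice0.
  by move=> [z]; rewrite splice0.
have splice_scons (a : M) z e :
    splice n.+1 (fun i => if i == n then a else z i) e = splice n z (scons a e).
  apply: funext => i; rewrite /splice; case: (ltngtP i n) => lt_in.
  - by have -> : (i < n.+1) = true by lia.
  - have -> : (i < n.+1) = false by lia.
    by have -> : i - n = (i - n.+1).+1 by lia.
  - by rewrite lt_in ltnSn subnn.
apply: eq_definable_env (definable_env_ex (IH P Pdef)) => e; apply: propext; split.
  by move=> [a [z Pz]]; exists (fun i => if i == n then a else z i); rewrite splice_scons.
move=> [z Pz]; exists (z n), z; congr P: Pz; rewrite -splice_scons.
by apply: funext => i; rewrite /splice; case: eqP => // ->.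
Qed.

Definition take_tuple n (e : nat -> M) : 'I_n -> M := fun o => e o.
Arguments take_tuple : clear implicits.

Lemma cat_env_ord n (v : 'I_n -> M) e (o : 'I_n) : cat_env v e o = v o.
Proof. by rewrite /cat_env valK. Qed.

Lemma cat_env_lt n (v : 'I_n -> M) e i (lt_in : i < n) :
  cat_env v e i = v (Ordinal lt_in).
Proof. by rewrite -[i]/(nat_of_ord (Ordinal lt_in)) cat_env_ord. Qed.

Lemma cat_env_ge n (v : 'I_n -> M) e i : n <= i -> cat_env v e i = e (i - n).
Proof. by move=> le_ni; rewrite /cat_env insubN // -leqNgt. Qed.

Lemma take_tuple_cat_env n (v : 'I_n -> M) e : take_tuple n (cat_env v e) = v.
Proof. by apply: funext => o; rewrite /take_tuple cat_env_ord. Qed.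

Lemma take_tuple_splice n (z e : nat -> M) : take_tuple n (splice n z e) = take_tuple n z.
Proof. by apply: funext => o; rewrite /take_tuple /splice ltn_ord. Qed.

Lemma cat_env_take_tuple n (e c : nat -> M) : cat_env (take_tuple n e) c = splice n e c.
Proof.
apply: funext => i; rewrite /splice; case: ltnP => lt_in.
  by rewrite cat_env_lt.
by rewrite cat_env_ge.
Qed.

Lemma splice_cat_env n (v : 'I_n -> M) e1 e : splice n (cat_env v e1) e = cat_env v e.
Proof.
apply: funext => i; rewrite /splice; case: ltnP => lt_in.
  by rewrite !cat_env_lt.
by rewrite cat_env_ge.
Qed.

Lemma definable_env_take_tuple n (D : set ('I_n -> M)) :
  definable D -> definable_env (fun e => D (take_tuple n e)).
Proof.
move=> [phi [c Dphi]]; apply: eq_definable_env (definable_env_sat_splice n c phi) => e.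
by rewrite -cat_env_take_tuple; apply: propext; split => /Dphi.
Qed.

Lemma definable_of_env n P (e0 : nat -> M) :
  definable_env P -> definable (fun v : 'I_n -> M => P (cat_env v e0)).
Proof.
move=> Pdef.
have : definable_env (fun e => P (splice n e e0)).
  apply: eq_definable_env (definable_env_subst (fun i => if i < n then Some i else None)
                        (fun i => e0 (i - n)) Pdef) => e.
  by congr P; apply: funext => i; rewrite /splice; case: ifP.
move=> [phi [c Pphi]].
pose s i := if odd i then n + i./2 else i./2.
exists (frename s phi), c => v.
rewrite -(splice_cat_env v c) Pphi sat_rename.
suff -> : interleave (cat_env v c) c = cat_env v c \o s by [].
apply: funext => i /=; case: (parityP i) => -[j ->]; rewrite /s; interleave_simpl => //.
by rewrite cat_env_ge ?leq_addr // addKn.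
Qed.

Lemma definableE n (D : set ('I_n -> M)) :
  definable D <-> definable_env (fun e => D (take_tuple n e)).
Proof.
split; first exact: definable_env_take_tuple.
move=> /(definable_of_env n (fun _ => m0)); congr definable.
by apply: funext => v; rewrite take_tuple_cat_env.
Qed.

Lemma definable_preim_cat_env n N (Z : set ('I_(n + N) -> M)) (c : nat -> M) :
  definable Z -> definable (fun a : 'I_n -> M => Z (take_tuple (n + N) (cat_env a c))).
Proof.
move=> /definable_env_take_tuple Zdef.
have := definable_of_env n (fun _ => m0) (definable_env_subst
  (fun i => if i < n then Some i else None) (fun i => c (i - n)) Zdef).
congr definable; apply: funext => a; rewrite -(splice_cat_env a (fun _ => m0) c).
by congr (Z (take_tuple _ _)); apply: funext => i; rewrite /splice; case: ifP.
Qed.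

Lemma definable_env_param_block (Q : (nat -> M) -> Prop) m :
  definable_env Q -> (forall e e', (forall i, i < m -> e i = e' i) -> Q e = Q e') ->
  exists (phi : formula L) (N : nat) (c : nat -> M),
    fbound phi <= m + N /\ forall e tail, Q e = sat (splice m e (splice N c tail)) phi.
Proof.
move=> [psi [c Qpsi]] Q_eq_on.
pose B := fbound psi.
pose s i := if i < B then (if odd i then m + i./2 else i./2) else 0.
have half_le i : i./2 <= i by rewrite -{2}(odd_double_half i); lia.
exists (frename s psi), B.+1, c; split.
  apply: fbound_rename => i; rewrite /s; case: ifP => lt_iB; last by lia.
  by case: ifP => _; have := half_le i; lia.
move=> e tail.
rewrite (Q_eq_on e (splice m e (splice B.+1 c tail))); last first.
  by move=> i lt_im; rewrite /splice lt_im.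
rewrite Qpsi sat_rename; apply: sat_eq_on => i lt_iB /=.
rewrite /s -/B lt_iB; case: (parityP i) lt_iB => -[j ->] lt_jB; interleave_simpl => //.
rewrite /splice.
have -> : (m + j < m) = false by lia.
have -> : (m + j - m < B.+1) = true by lia.
by have -> : m + j - m = j by lia.
Qed.

Section DefinableSets.
Variable n : nat.
Implicit Types D E : set ('I_n -> M).

Lemma definableT : definable [set: 'I_n -> M].
Proof. by apply/definableE; apply: eq_definable_env definable_envT. Qed.

Lemma definableI D E : definable D -> definable E -> definable (D `&` E).
Proof.
move=> /definableE Ddef /definableE Edef; apply/definableE.
exact: eq_definable_env (definable_envI Ddef Edef).
Qed.

Lemma definableC D : definable D -> definable (~` D).
Proof.
move=> /definableE Ddef; apply/definableE.
exact: eq_definable_env (definable_envN Ddef).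
Qed.

Lemma definable0 : definable (@set0 ('I_n -> M)).
Proof. by rewrite -setCT; apply: definableC; exact: definableT. Qed.

Lemma definableU D E : definable D -> definable E -> definable (D `|` E).
Proof.
move=> Ddef Edef; rewrite -[_ `|` _]setCK setCU; apply: definableC.
by apply: definableI; apply: definableC.
Qed.

End DefinableSets.

End EnvDefinability.
Arguments take_tuple {L M} n e.

Section CompleteTypes.
Variables (L : signature) (M : structure L) (k : nat).
Variable p : set (set ('I_k -> M)).
Hypothesis p_ctype : is_complete_type p.
Implicit Types D E : set ('I_k -> M).

Lemma ctype_definable D : p D -> definable D.
Proof. by case: p_ctype => pdef _; apply: pdef. Qed.

Lemma ctypeT : p setT.
Proof. by case: p_ctype => _ []. Qed.

Lemma ctype_set0 : ~ p set0.
Proof. by case: p_ctype => _ []. Qed.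

Lemma ctypeI D E : p D -> p E -> p (D `&` E).
Proof. by case: p_ctype => _ [_ _ pI _ _]; apply: pI. Qed.

Lemma ctypeS D E : p D -> definable E -> D `<=` E -> p E.
Proof. by case: p_ctype => _ [_ _ _ pS _]; apply: pS. Qed.

Lemma ctype_or_setC D : definable D -> p D \/ p (~` D).
Proof. by case: p_ctype => _ [_ _ _ _ pC]; apply: pC. Qed.

Lemma ctype_nsetC D : p D -> ~ p (~` D).
Proof. by move=> pD pCD; apply: ctype_set0; rewrite -(setICr D); apply: ctypeI. Qed.

Lemma ctype_setC D : definable D -> ~ p D -> p (~` D).
Proof. by move=> /ctype_or_setC []. Qed.

Lemma ctype_ne D : p D -> exists a, D a.
Proof.
move=> pD; apply: contrapT => noD; apply: ctype_set0.
suff <- : D = set0 by [].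
by apply: funext => a; apply: propext; split=> // Da; apply: noD; exists a.
Qed.

End CompleteTypes.

Section RealizedTypes.
Variables (L : signature) (M : structure L) (k : nat) (Gset : set ('I_k -> M)).

Lemma sgval_inj (p q : SG Gset) : sgval p = sgval q -> p = q.
Proof.
case: p q => p Hp [q Hq] /= pq; subst q.
by congr mkSG; apply: Prop_irrelevance.
Qed.

Lemma SG_complete (q : SG Gset) : is_complete_type (sgval q).
Proof. by case: (sgvalP q). Qed.

Lemma SG_Gset (q : SG Gset) : sgval q Gset.
Proof. by case: (sgvalP q). Qed.

Lemma SG_ne (q : SG Gset) D : sgval q D -> exists g : Gty Gset, D (sval g).
Proof.
move=> qD; have [a [Ga Da]] := ctype_ne (SG_complete q) (ctypeI (SG_complete q) (SG_Gset q) qD).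
by exists (exist _ a Ga).
Qed.

Variable m0 : M.

Lemma tp_complete (a : 'I_k -> M) : is_complete_type (tp a).
Proof.
split; first by move=> D [].
split.
- by split=> //; exact: (definableT m0 _).
- by case.
- move=> D E [Ddef Da] [Edef Ea]; split; last by [].
  exact: (definableI m0 Ddef Edef).
- by move=> D E [Ddef Da] Edef DE; split => //; exact: DE.
- move=> D Ddef; case: (pselect (D a)) => Da; [left|right]; split => //.
  exact: (definableC m0 Ddef).
Qed.

Lemma tp_SG a : definable Gset -> Gset a -> is_SG Gset (tp a).
Proof. by move=> Gdef Ga; split; [exact: tp_complete|]. Qed.

End RealizedTypes.

(** * Translates of definable sets *)

Ltac splice_simpl := rewrite /splice /=; repeat (case: ifP => ?); try (by []);
  try (by exfalso; lia); try (by f_equal; lia).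

Lemma sig_eta (T : Type) (P : T -> Prop) (x : {a | P a}) (Px : P (sval x)) :
  exist _ (sval x) Px = x.
Proof. by case: x Px => a Pa Pa' /=; congr exist; apply: Prop_irrelevance. Qed.

Section Translates.
Variables (L : signature) (M : structure L) (m0 : M) (k : nat).
Variables (Gset : set ('I_k -> M)) (mul : Gty Gset -> Gty Gset -> Gty Gset).
Variables (phiM : formula L) (cM : nat -> M).
Hypothesis mul_phiM : forall a b d : Gty Gset, mul a b = d <->
  sat (cat_env (sval a) (cat_env (sval b) (cat_env (sval d) cM))) phiM.
Hypothesis Gdef : definable Gset.

Local Notation tuple_env v := (cat_env v (fun _ => m0)).

(* [mul_rel e]: the first three [k]-blocks [a, b, d] of [e] satisfy [a b = d]. *)
Definition mul_rel (e : nat -> M) : Prop := sat (splice (k + (k + k)) e cM) phiM.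

Lemma mul_rel_eq_on e e' :
  (forall i, i < k + (k + k) -> e i = e' i) -> mul_rel e = mul_rel e'.
Proof.
by move=> ee'; rewrite /mul_rel; congr sat; apply: funext => i; splice_simpl; apply: ee'.
Qed.

Lemma mul_relE (a b d : Gty Gset) :
  mul_rel (splice k (tuple_env (sval a)) (splice k (tuple_env (sval b)) (tuple_env (sval d))))
  <-> mul a b = d.
Proof.
rewrite mul_phiM /mul_rel; set A := tuple_env (sval a); set B := tuple_env (sval b).
set D := tuple_env (sval d).
rewrite -[cat_env (sval d) cM](splice_cat_env _ (fun _ => m0)) -/D.
rewrite -[cat_env (sval b) _](splice_cat_env _ (fun _ => m0)) -/B.
rewrite -[cat_env (sval a) _](splice_cat_env _ (fun _ => m0)) -/A.
suff -> : splice (k + (k + k)) (splice k A (splice k B D)) cM =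
  splice k A (splice k B (splice k D cM)) by [].
by apply: funext => i; splice_simpl.
Qed.

Definition mul_preim (g : Gty Gset) (D : set ('I_k -> M)) : set ('I_k -> M) :=
  fun a => exists Ga : Gset a, D (sval (mul g (exist _ a Ga))).

Definition block_perm (i : nat) : nat :=
  if i < k then k + k + i else if i < k + k then i else i - (k + k).

Lemma mul_rel_block_perm (z x a tail : nat -> M) :
  mul_rel (splice k z (splice k x a) \o block_perm) =
  mul_rel (splice k a (splice k x (splice k z tail))).
Proof.
apply: mul_rel_eq_on => i lti; rewrite /= /block_perm.
by case: (ltnP i k) => ?; last case: (ltnP i (k + k)) => ?; splice_simpl.
Qed.

(* [mul_preim_env D e]: the first block [x] of [e] is in [mul_preim a D], where [a]
   is the second block; the witness [z] is spliced in front, so that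
   [block_perm] moves the blocks [(z, x, a)] into the order [(a, x, z)]. *)
Definition mul_preim_env (D : set ('I_k -> M)) (e : nat -> M) : Prop :=
  Gset (take_tuple k e) /\ exists z : nat -> M,
    [/\ Gset (take_tuple k z), D (take_tuple k z) & mul_rel (splice k z e \o block_perm)].

Lemma definable_mul_preim_env D : definable D -> definable_env (mul_preim_env D).
Proof.
move=> Ddef.
have witness_def : definable_env (fun E => [/\ Gset (take_tuple k E),
    D (take_tuple k E) & mul_rel (E \o block_perm)]).
  apply: eq_definable_env (definable_envI (definable_env_take_tuple Gdef)
    (definable_envI (definable_env_take_tuple Ddef)
      (definable_env_subst (fun i => Some (block_perm i)) (fun _ => m0)
        (definable_env_sat_splice (k + (k + k)) cM phiM)))) => E.
  by apply: propext; split=> [[? [? ?]]|[? ? ?]].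
apply: eq_definable_env (definable_envI (definable_env_take_tuple Gdef)
  (definable_env_exn m0 k witness_def)) => e.
by rewrite /mul_preim_env; under eq_exists => z do rewrite take_tuple_splice.
Qed.

Lemma mul_preim_env_eq_on D e e' :
  (forall i, i < k + k -> e i = e' i) -> mul_preim_env D e = mul_preim_env D e'.
Proof.
move=> ee'; rewrite /mul_preim_env.
have -> : take_tuple k e = take_tuple k e'.
  by apply: funext => o; rewrite /take_tuple ee' //; have := ltn_ord o; lia.
have perm_eq_on z : mul_rel (splice k z e \o block_perm) = mul_rel (splice k z e' \o block_perm).
  by apply: mul_rel_eq_on => i lti; rewrite /block_perm /=; splice_simpl; apply: ee'; lia.
by under eq_exists => z do rewrite perm_eq_on.
Qed.

Lemma mul_preim_envE g D x :
  mul_preim g D x = mul_preim_env D (splice k (tuple_env x) (tuple_env (sval g))).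
Proof.
have perm_mulE (z : nat -> M) Gx Gz : mul_rel
    (splice k z (splice k (tuple_env x) (tuple_env (sval g))) \o block_perm) <->
    mul g (exist _ x Gx) = exist _ (take_tuple k z) Gz.
  by rewrite -mul_relE /= cat_env_take_tuple (mul_rel_block_perm _ _ _ (fun _ => m0)).
rewrite /mul_preim_env take_tuple_splice take_tuple_cat_env.
apply: propext; split.
  move=> [Gx Dgx]; split=> //; exists (tuple_env (sval (mul g (exist _ x Gx)))).
  have Gz : Gset (take_tuple k (tuple_env (sval (mul g (exist _ x Gx))))).
    by rewrite take_tuple_cat_env; exact: svalP.
  split=> //; first by rewrite take_tuple_cat_env.
  by apply/(perm_mulE _ Gx Gz); move: Gz; rewrite take_tuple_cat_env => Gz; rewrite sig_eta.
move=> [Gx [z [Gz Dz /(perm_mulE _ Gx Gz) gx]]].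
by exists Gx; rewrite gx.
Qed.

Lemma mul_preim_uniform D : definable D ->
  exists (phi : formula L) (N : nat) (c : nat -> M),
    fbound phi <= k + (k + N) /\ forall (g : Gty Gset) (tail : nat -> M),
      mul_preim g D =
      fun x => sat (cat_env x (cat_env (take_tuple (k + N) (cat_env (sval g) c)) tail)) phi.
Proof.
move=> Ddef.
have [phi [N [c [phi_bound preim_phi]]]] := definable_env_param_block
  (definable_mul_preim_env Ddef) (@mul_preim_env_eq_on D).
exists phi, N, c; split; first by rewrite addnA.
move=> g tail; apply: funext => x; rewrite mul_preim_envE (preim_phi _ tail).
rewrite cat_env_take_tuple -(splice_cat_env (sval g) (fun _ => m0) c).
rewrite -(splice_cat_env x (fun _ => m0) (splice (k + N) _ tail)).
by congr sat; apply: funext => i; splice_simpl.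
Qed.

Lemma mul_preim_definable g D : definable D -> definable (mul_preim g D).
Proof.
move=> /mul_preim_uniform [phi [N [c [_ preim_phi]]]].
by exists phi, (cat_env (take_tuple (k + N) (cat_env (sval g) c)) (fun _ => m0)) => x;
  rewrite (preim_phi _ (fun _ => m0)).
Qed.

Lemma definable_type_mul_preim (p : SG Gset) D :
  definable_type (sgval p) -> definable D ->
  definable (fun a => exists Ga : Gset a, sgval p (mul_preim (exist _ a Ga) D)).
Proof.
move=> p_def /mul_preim_uniform [phi [N [c [phi_bound preim_phi]]]].
suff -> : (fun a => exists Ga : Gset a, sgval p (mul_preim (exist _ a Ga) D)) =
  Gset `&` (fun a => sgval p (fun x =>
     sat (cat_env x (cat_env (take_tuple (k + N) (cat_env a c)) (fun _ => m0))) phi)).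
  exact: (definableI m0 Gdef (definable_preim_cat_env m0 c (p_def _ phi _ phi_bound))).
apply: funext => a; apply: propext; split.
  by move=> [Ga pa]; split=> //; rewrite (preim_phi _ (fun _ => m0)) in pa.
by move=> [Ga pa]; exists Ga; rewrite (preim_phi _ (fun _ => m0)).
Qed.

End Translates.

(** * The action of [G] on [S_G(M)] *)

Section Action.
Variables (L : signature) (M : structure L) (m0 : M) (k : nat).
Variables (Gset : set ('I_k -> M)) (mul : Gty Gset -> Gty Gset -> Gty Gset).
Variable one : Gty Gset.
Variables (phiM : formula L) (cM : nat -> M).
Hypothesis mul_phiM : forall a b d : Gty Gset, mul a b = d <->
  sat (cat_env (sval a) (cat_env (sval b) (cat_env (sval d) cM))) phiM.
Hypothesis Gdef : definable Gset.
Hypothesis mulA : associative mul.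
Hypothesis mul1g : left_id one mul.
Hypothesis mulVg : forall g, exists h, mul h g = one.

Local Notation mul_preim := (mul_preim mul).
Local Notation mul_preim_definable := (mul_preim_definable m0 mul_phiM Gdef).

Lemma mul_linv_rinv g h : mul h g = one -> mul g h = one.
Proof.
move=> hg; have [h' h'h] := mulVg h.
by rewrite -[mul g h]mul1g -h'h -mulA (mulA h) hg mul1g.
Qed.

Lemma mulg1 g : mul g one = g.
Proof. by have [h hg] := mulVg g; rewrite -hg mulA (mul_linv_rinv hg) mul1g. Qed.

Lemma mul_preimI g D E : mul_preim g (D `&` E) = mul_preim g D `&` mul_preim g E.
Proof.
apply: funext => a; apply: propext; split.
  by move=> [Ga [Da Ea]]; split; exists Ga.
move=> [[Ga Da] [Ga' Ea]]; exists Ga; split => //.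
by rewrite (Prop_irrelevance Ga Ga').
Qed.

Lemma mul_preimS g D E : D `<=` E -> mul_preim g D `<=` mul_preim g E.
Proof. by move=> DE a [Ga Da]; exists Ga; apply: DE. Qed.

Lemma mul_preimG g : mul_preim g Gset = Gset.
Proof.
apply: funext => a; apply: propext; split; first by case.
by move=> Ga; exists Ga; exact: svalP.
Qed.

Lemma mul_preimT g : mul_preim g setT = Gset.
Proof. by apply: funext => a; apply: propext; split; [case|move=> Ga; exists Ga]. Qed.

Lemma mul_preim0 g : mul_preim g set0 = set0.
Proof. by apply: funext => a; apply: propext; split => // -[]. Qed.

Lemma mul_preimC g D : mul_preim g (~` D) = Gset `&` ~` mul_preim g D.
Proof.
apply: funext => a; apply: propext; split.
  move=> [Ga nDa]; split => // -[Ga' Da]; apply: nDa.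
  by rewrite (Prop_irrelevance Ga Ga').
by move=> [Ga nDa]; exists Ga => Da; apply: nDa; exists Ga.
Qed.

Lemma mul_preim1 D : mul_preim one D = Gset `&` D.
Proof.
apply: funext => a; apply: propext; split.
  by move=> [Ga]; rewrite mul1g.
by move=> [Ga Da]; exists Ga; rewrite mul1g.
Qed.

Lemma mul_preimM g h D : mul_preim (mul g h) D = mul_preim h (mul_preim g D).
Proof.
apply: funext => a; apply: propext; split.
  move=> [Ga Da]; exists Ga; exists (svalP (mul h (exist _ a Ga))).
  by rewrite sig_eta mulA.
by move=> [Ga [Gha Da]]; exists Ga; move: Da; rewrite sig_eta mulA.
Qed.

Lemma shift_typeE g p D : shift_type mul g p D = (definable D /\ p (mul_preim g D)).
Proof. by []. Qed.

Lemma shift_type_SG g p : is_SG Gset p -> is_SG Gset (shift_type mul g p).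
Proof.
move=> [p_ctype pG]; split; last first.
  by rewrite shift_typeE mul_preimG.
split; first by move=> D [].
split; rewrite ?shift_typeE.
- by rewrite mul_preimT; split; [exact: (definableT m0 _)|].
- by rewrite mul_preim0 => -[_]; exact: ctype_set0.
- move=> D E; rewrite !shift_typeE => -[Ddef pD] [Edef pE].
  split; first exact: (definableI m0 Ddef Edef).
  by rewrite mul_preimI; exact: ctypeI.
- move=> D E; rewrite !shift_typeE => -[Ddef pD] Edef DE; split => //.
  exact: (ctypeS p_ctype pD (mul_preim_definable g Edef) (mul_preimS DE)).
- move=> D Ddef; rewrite !shift_typeE.
  case: (ctype_or_setC p_ctype (mul_preim_definable g Ddef)) => pD.
    by left.
  right; split; first exact: (definableC m0 Ddef).
  by rewrite mul_preimC; exact: ctypeI.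
Qed.

Lemma act_SGE g q : sgval (act_SG mul g q) = shift_type mul g (sgval q).
Proof.
rewrite /act_SG; case: pselect => // not_SG; exfalso; apply: not_SG.
exact: shift_type_SG (sgvalP q).
Qed.

Lemma act_SG1 q : act_SG mul one q = q.
Proof.
apply: sgval_inj; rewrite act_SGE; apply: funext => D; apply: propext.
rewrite shift_typeE mul_preim1; split.
  by move=> [Ddef qGD]; exact: (ctypeS (SG_complete q) qGD Ddef (@subIsetr _ _ _)).
move=> qD; split; first exact: (ctype_definable (SG_complete q) qD).
exact: (ctypeI (SG_complete q) (SG_Gset q) qD).
Qed.

Lemma act_SGM g h q : act_SG mul (mul g h) q = act_SG mul g (act_SG mul h q).
Proof.
apply: sgval_inj; rewrite !act_SGE; apply: funext => D; apply: propext.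
rewrite !shift_typeE mul_preimM; split.
  by move=> [Ddef qD]; split=> //; split=> //; exact: mul_preim_definable.
by move=> [Ddef [_ qD]].
Qed.

Lemma act_SG_tp g a (Ga : Gset a) (tpa : is_SG Gset (tp a))
  (tpga : is_SG Gset (tp (sval (mul g (exist _ a Ga))))) :
  act_SG mul g (mkSG tpa) = mkSG tpga.
Proof.
apply: sgval_inj; rewrite act_SGE /=; apply: funext => D; apply: propext.
rewrite shift_typeE /tp; split.
  move=> [Ddef [_ [Ga' Dga]]]; split => //.
  by rewrite (Prop_irrelevance Ga Ga').
move=> [Ddef Dga]; split => //; split; first exact: mul_preim_definable.
by exists Ga.
Qed.

Lemma act_SG_tp1 (tp1_SG : is_SG Gset (tp (sval one))) (g : Gty Gset)
    (tpg : is_SG Gset (tp (sval g))) :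
  act_SG mul g (mkSG tp1_SG) = mkSG tpg.
Proof.
have tpg1 : is_SG Gset (tp (sval (mul g (exist _ (sval one) (svalP one))))).
  by rewrite sig_eta mulg1.
rewrite (act_SG_tp (Ga := svalP one) tp1_SG tpg1).
by apply: sgval_inj => /=; rewrite sig_eta mulg1.
Qed.

End Action.

(** * The Stone space [S_G(M)] *)

Section StoneSpace.
Variables (L : signature) (M : structure L) (m0 : M) (k : nat).
Variable Gset : set ('I_k -> M).

Local Notation SGt := (SG Gset).
Local Notation stone := (@stone_basic L M k Gset).

Lemma stone_basicI D E : definable D -> definable E ->
  stone (D `&` E) = stone D `&` stone E.
Proof.
move=> Ddef Edef; apply: funext => q; apply: propext; split.
  by move=> qDE; split; apply: (ctypeS (SG_complete q) qDE) => // x [].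
by move=> [qD qE]; exact: (ctypeI (SG_complete q) qD qE).
Qed.

Lemma stone_basicT : stone setT = setT.
Proof. by apply: funext => q; apply: propext; split => // _; exact: (ctypeT (SG_complete q)). Qed.

Lemma stone_basicC D : definable D -> stone (~` D) = ~` stone D.
Proof.
move=> Ddef; apply: funext => q; apply: propext; split.
  by move=> qCD qD; exact: (ctype_nsetC (SG_complete q) qD qCD).
exact: (ctype_setC (SG_complete q) Ddef).
Qed.

Lemma stone_basic0 : stone set0 = set0.
Proof.
by apply: funext => q; apply: propext; split => // q0; exact: (ctype_set0 (SG_complete q) q0).
Qed.

Lemma stone_basicG : stone Gset = setT.
Proof. by apply: funext => q; apply: propext; split => // _; exact: SG_Gset. Qed.

Lemma stone_basicU D E : definable D -> definable E ->
  stone (D `|` E) = stone D `|` stone E.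
Proof.
move=> Ddef Edef; rewrite -[D `|` E]setCK setCU stone_basicC; last first.
  by apply: (definableI m0); apply: (definableC m0).
by rewrite stone_basicI ?stone_basicC ?setCI ?setCK //; apply: (definableC m0).
Qed.

Lemma bigcap_stone_basic (s : seq (set ('I_k -> M))) :
  (forall D, D \in s -> definable D) ->
  exists E, definable E /\ \big[setI/setT]_(D <- s) stone D = stone E.
Proof.
elim: s => [|D s IH] sdef.
  by exists setT; split; [exact: (definableT m0 _)|rewrite big_nil stone_basicT].
have [|E [Edef sE]] := IH; first by move=> D' D's; apply: sdef; rewrite inE D's orbT.
have Ddef : definable D by apply: sdef; rewrite inE eqxx.
exists (D `&` E); split; first exact: (definableI m0 Ddef Edef).
by rewrite big_cons sE stone_basicI.
Qed.

Lemma finI_stone_basic A : finI_from (@definable L M k) stone A ->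
  exists E, definable E /\ A = stone E.
Proof.
move=> [F Fdef <-]; rewrite bigcap_fset.
by apply: bigcap_stone_basic => D /Fdef; rewrite in_setE.
Qed.

Lemma nbhs_stone_basic (q : SGt) N : nbhs q N ->
  exists E, [/\ definable E, sgval q E & stone E `<=` N].
Proof.
rewrite nbhsE => -[B [[As Asdef AsB] Bq] BN].
rewrite -AsB in Bq; case: Bq => A AsA Aq.
have [E [Edef AE]] := finI_stone_basic (Asdef _ AsA).
exists E; split => //; first by rewrite AE in Aq.
by move=> r Er; apply: BN; rewrite -AsB; exists A => //; rewrite AE.
Qed.

Lemma stone_basic_nbhs (q : SGt) D : definable D -> sgval q D -> nbhs q (stone D).
Proof.
move=> Ddef qD; rewrite nbhsE; exists (stone D) => //; split => //.
by exists [set stone D]; [move=> A ->; exact: finI_from1|rewrite bigcup_set1].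
Qed.

Lemma SG_hausdorff : hausdorff_space SGt.
Proof.
have separate (p q : SGt) D : sgval p D -> ~ sgval q D -> ~ cluster (nbhs p) q.
  move=> pD nqD pq; have Ddef := ctype_definable (SG_complete p) pD.
  have [r [rD rCD]] := pq _ _ (stone_basic_nbhs Ddef pD)
    (stone_basic_nbhs (definableC m0 Ddef) (ctype_setC (SG_complete q) Ddef nqD)).
  exact: (ctype_nsetC (SG_complete r) rD rCD).
move=> p q pq; apply: sgval_inj; apply: funext => D; apply: propext.
split=> [pD|qD]; apply: contrapT => nD; first exact: separate pD nD pq.
apply: separate qD nD _ => A B qA pB; rewrite setIC; exact: pq.
Qed.

Hypothesis Gdef : definable Gset.

Lemma SG_compact : compact [set: SGt].
Proof.
rewrite compact_ultra => F F_ultra _.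
have F_proper : ProperFilter F by apply: ultra_proper.
pose pF D := definable D /\ F (stone D).
have pF_SG : is_SG Gset pF.
  split; last by split => //; rewrite /pF stone_basicG; exact: filterT.
  split; first by move=> D [].
  split.
  - by split; [exact: (definableT m0 _)|rewrite stone_basicT; exact: filterT].
  - by move=> [_]; rewrite stone_basic0; exact: filter_not_empty.
  - move=> D E [Ddef FD] [Edef FE]; split; first exact: (definableI m0 Ddef Edef).
    by rewrite stone_basicI //; exact: filterI.
  - move=> D E [Ddef FD] Edef DE; split => //; apply: filterS FD => r rD.
    exact: (ctypeS (SG_complete r) rD Edef DE).
  - move=> D Ddef; case: (in_ultra_setVsetC (stone D) F_ultra) => FD; [left|right] => //.
    by split; [exact: (definableC m0 Ddef)|rewrite stone_basicC].
exists (mkSG pF_SG); split => // N /nbhs_stone_basic [E [Edef [_ FE] EN]].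
exact: filterS EN FE.
Qed.

Lemma SG_continuous (f : SGt -> SGt) :
  (forall D, definable D -> exists D', definable D' /\ f @^-1` stone D = stone D') ->
  continuous f.
Proof.
move=> f_basic x N /nbhs_stone_basic [E [Edef fxE EN]].
have [D' [D'def fE]] := f_basic E Edef.
have xD' : sgval x D' by rewrite -[sgval x D']/(stone D' x) -fE.
by apply: filterS (stone_basic_nbhs D'def xD') => y; rewrite -fE => /EN.
Qed.

Lemma closed_SG_compact (C : set SGt) : closed C -> compact C.
Proof. by move=> Cclosed; exact: (subclosed_compact Cclosed SG_compact). Qed.

Lemma stone_basic_separate_point (q : SGt) (C : set SGt) : closed C -> ~ C q ->
  exists D, [/\ definable D, sgval q D & stone D `&` C = set0].
Proof.
move=> Cclosed nCq; apply: contrapT => no_sep.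
have meets D : sgval q D -> stone D `&` C !=set0.
  move=> qD; apply: contrapT => nmeet; apply: no_sep; exists D; split => //.
    exact: (ctype_definable (SG_complete q) qD).
  by apply: funext => r; apply: propext; split => // rDC; apply: nmeet; exists r.
pose F := filter_from (sgval q) (fun D => stone D `&` C).
have F_filter : Filter F.
  apply: filter_from_filter; first by exists setT; exact: (ctypeT (SG_complete q)).
  move=> D E qD qE; exists (D `&` E); first exact: (ctypeI (SG_complete q) qD qE).
  rewrite stone_basicI; [|exact: (ctype_definable (SG_complete q) qD)
                         |exact: (ctype_definable (SG_complete q) qE)].
  by move=> r [[rD rE] rC]; split; split.
have F_proper : ProperFilter F by apply: filter_from_proper => D qD; apply: meets.
have FC : F C by exists setT; [exact: (ctypeT (SG_complete q))|move=> r []].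
have [r [Cr Fr]] := closed_SG_compact Cclosed F_proper FC.
suff qr : q = r by apply: nCq; rewrite qr.
apply: SG_hausdorff => A B qA rB.
have [E [Edef qE EA]] := nbhs_stone_basic qA.
have FE : F (stone E `&` C) by exists E.
have [s [[sE _] sB]] := Fr _ _ FE rB.
by exists s; split => //; apply: EA.
Qed.

Lemma stone_basic_separate (C1 C2 : set SGt) : closed C1 -> closed C2 ->
  C1 `&` C2 = set0 -> exists D, [/\ definable D, C1 `<=` stone D & stone D `&` C2 = set0].
Proof.
move=> C1closed C2closed C12; apply: contrapT => no_sep.
pose I D := definable D /\ stone D `&` C2 = set0.
have escapes D : I D -> C1 `&` ~` stone D !=set0.
  move=> [Ddef DC2]; apply: contrapT => nesc; apply: no_sep; exists D; split => //.
  by move=> r C1r; apply: contrapT => nDr; apply: nesc; exists r.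
have I0 : I set0 by split; [exact: (definable0 m0)|rewrite stone_basic0 set0I].
pose F := filter_from I (fun D => C1 `&` ~` stone D).
have F_filter : Filter F.
  apply: filter_from_filter; first by exists set0.
  move=> D E [Ddef DC2] [Edef EC2]; exists (D `|` E).
    split; first exact: (definableU m0 Ddef Edef).
    by rewrite stone_basicU // setIUl DC2 EC2 setU0.
  by rewrite stone_basicU // => r [C1r nDEr]; split; split => // ?; apply: nDEr; [left|right].
have F_proper : ProperFilter F by apply: filter_from_proper => D ID; apply: escapes.
have FC1 : F C1 by exists set0 => // r [].
have [r [C1r Fr]] := closed_SG_compact C1closed F_proper FC1.
have nC2r : ~ C2 r by move=> C2r; have : (C1 `&` C2) r by []; rewrite C12.
have [D [Ddef rD DC2]] := stone_basic_separate_point C2closed nC2r.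
have FD : F (C1 `&` ~` stone D) by exists D.
have [s [[_ nDs] Ds]] := Fr _ _ FD (stone_basic_nbhs Ddef rD).
exact: nDs Ds.
Qed.

End StoneSpace.

(** * The universal property *)

Section UniversalMap.
Variables (L : signature) (M : structure L) (m0 : M) (k : nat).
Variables (Gset : set ('I_k -> M)) (mul : Gty Gset -> Gty Gset -> Gty Gset).
Variable one : Gty Gset.
Variables (phiM : formula L) (cM : nat -> M).
Hypothesis mul_phiM : forall a b d : Gty Gset, mul a b = d <->
  sat (cat_env (sval a) (cat_env (sval b) (cat_env (sval d) cM))) phiM.
Hypothesis Gdef : definable Gset.
Hypothesis mulA : associative mul.
Hypothesis mul1g : left_id one mul.
Hypothesis mulVg : forall g, exists h, mul h g = one.

Variables (X : topologicalType) (act : Gty Gset -> X -> X) (x0 : X).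
Hypothesis X_hausdorff : hausdorff_space X.
Hypothesis X_compact : compact [set: X].
Hypothesis act1 : forall x, act one x = x.
Hypothesis actM : forall g h x, act (mul g h) x = act g (act h x).
Hypothesis act_continuous : forall g, continuous (act g).
Hypothesis orbit_map_definable : definable_map (fun g => act g x0).
Hypothesis orbit_dense : closure (range (fun g => act g x0)) = [set: X].

Local Notation SGt := (SG Gset).
Local Notation act_SGE := (act_SGE m0 mul_phiM Gdef).
Local Notation act_SG_tp1 := (act_SG_tp1 m0 mul_phiM Gdef mulA mul1g mulVg).

Definition orbit_image (D : set ('I_k -> M)) : set X :=
  [set act g x0 | g in [set g | D (sval g)]].

Definition orbit_limit (q : SGt) (y : X) : Prop :=
  forall D, sgval q D -> closure (orbit_image D) y.

Lemma orbit_limit_exists q : exists y, orbit_limit q y.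
Proof.
pose F := filter_from (sgval q) orbit_image.
have F_filter : Filter F.
  apply: filter_from_filter; first by exists setT; exact: (ctypeT (SG_complete q)).
  move=> D E qD qE; exists (D `&` E); first exact: (ctypeI (SG_complete q) qD qE).
  by move=> _ [g [Dg Eg] <-]; split; exists g.
have F_proper : ProperFilter F.
  by apply: filter_from_proper => D qD; have [g Dg] := SG_ne qD; exists (act g x0), g.
have [y [_ Fy]] := X_compact F_proper (@filterT _ F _).
by exists y => D qD; rewrite clusterE in Fy; apply: Fy; exists D.
Qed.

Lemma nbhs_closure_sub (x : X) U : nbhs x U -> exists2 V, nbhs x V & closure V `<=` U.
Proof.
move=> xU; have x_regular := compact_regular X_hausdorff X_compact (@filterT X (nbhs x) _).
by have [V xV VU] := x_regular _ U xU; exists V.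
Qed.

(* The definable map [g |-> g x0] separates [closure W] from the complement of
   [V°]; completeness of [q] picks a side, and [orbit_limit q y] excludes the wrong one. *)
Lemma orbit_limit_nbhs q y : orbit_limit q y -> forall U, nbhs y U ->
  exists D, [/\ definable D, sgval q D &
    exists C, [/\ closed C, C `<=` U & forall g, D (sval g) -> C (act g x0)]].
Proof.
move=> qy U yU.
have [V yV VU] := nbhs_closure_sub yU.
have [W yW WV] := nbhs_closure_sub (nbhs_interior yV).
have disj : closure W `&` ~` V° = set0.
  by apply: funext => z; apply: propext; split => // -[/WV Vz nVz].
have [Y [Ydef YG WY YV]] := orbit_map_definable (@closed_closure _ W)
  (open_closedC (@open_interior _ V)) disj.
case: (ctype_or_setC (SG_complete q) Ydef) => qY.
  exists Y; split => //; exists (closure V); split => //; first exact: closed_closure.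
  move=> g Yg; apply: subset_closure; apply: interior_subset.
  exact: contrapT (YV g Yg).
exfalso; have [z [[g nYg <-] Wz]] := qy _ qY W yW.
by apply: nYg; apply: WY; apply: subset_closure.
Qed.

Lemma orbit_limit_sub q y D : orbit_limit q y -> sgval q D ->
  forall C, closed C -> (forall g, D (sval g) -> C (act g x0)) -> C y.
Proof.
move=> qy qD C Cclosed DC; apply: Cclosed; apply: (@closureS _ (orbit_image D)) (qy _ qD).
by move=> _ [g Dg <-]; apply: DC.
Qed.

Lemma orbit_limit_unique q y1 y2 : orbit_limit q y1 -> orbit_limit q y2 -> y1 = y2.
Proof.
move=> qy1 qy2; apply/esym/X_hausdorff => A B y2A y1B.
have [D [Ddef qD [C [Cclosed CA DC]]]] := orbit_limit_nbhs qy2 y2A.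
by exists y1; split; [exact: (CA _ (orbit_limit_sub qy1 qD Cclosed DC))|exact: nbhs_singleton].
Qed.

Definition univ_map (q : SGt) : X := xget x0 (orbit_limit q).

Lemma univ_mapP q : orbit_limit q (univ_map q).
Proof. exact: (xgetPex x0 (orbit_limit_exists q)). Qed.

Lemma univ_map_eq q y : orbit_limit q y -> univ_map q = y.
Proof. exact: (orbit_limit_unique (@univ_mapP q)). Qed.

Lemma univ_map_continuous : continuous univ_map.
Proof.
move=> q U qU.
have [D [Ddef qD [C [Cclosed CU DC]]]] := orbit_limit_nbhs (@univ_mapP q) qU.
apply: filterS (stone_basic_nbhs Ddef qD) => r rD; apply: CU.
exact: (orbit_limit_sub (@univ_mapP r) rD Cclosed DC).
Qed.

Lemma univ_map_equivariant g q : univ_map (act_SG mul g q) = act g (univ_map q).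
Proof.
apply: univ_map_eq => E; rewrite act_SGE shift_typeE => -[Edef qE] B gqB.
have qB : nbhs (univ_map q) (act g @^-1` B) by exact: act_continuous.
have [_ [[a [Ga Ea] <-] Bz]] := univ_mapP qE qB.
exists (act (mul g a) x0); split; last by rewrite actM.
by exists (mul g a) => //; rewrite sig_eta in Ea.
Qed.

Section BasePoint.
Variable tp1_SG : is_SG Gset (tp (sval one)).
Local Notation tp1 := (mkSG tp1_SG).

Lemma univ_map_tp1 : univ_map tp1 = x0.
Proof.
apply: univ_map_eq => D [_ D1]; apply: subset_closure.
by exists one => //; rewrite act1.
Qed.

Lemma univ_map_surjective x : exists p, univ_map p = x.
Proof.
have image_compact : compact [set univ_map p | p in [set: SGt]].
  apply: continuous_compact; first exact: continuous_subspaceT univ_map_continuous.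
  exact: (SG_compact m0 Gdef).
suff [p _ <-] : [set univ_map p | p in [set: SGt]] x by exists p.
apply: (compact_closed X_hausdorff image_compact).
have : closure (range (fun g => act g x0)) x by rewrite orbit_dense.
apply: closureS => _ [g _ <-]; exists (act_SG mul g tp1) => //.
by rewrite univ_map_equivariant univ_map_tp1.
Qed.

Lemma univ_map_unique (h : SGt -> X) : continuous h ->
  (forall g p, h (act_SG mul g p) = act g (h p)) -> h tp1 = x0 -> h = univ_map.
Proof.
move=> h_cont h_equiv h1; apply: funext => p; apply/esym/univ_map_eq => D pD B hpB.
have [E [Edef pE EB]] := nbhs_stone_basic m0 (h_cont _ _ hpB).
have [g [Eg Dg]] := SG_ne (ctypeI (SG_complete p) pE pD).
have tpg := tp_SG m0 Gdef (svalP g).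
exists (act g x0); split; first by exists g.
have <- : h (mkSG tpg) = act g x0 by rewrite -(act_SG_tp1 tp1_SG tpg) h_equiv h1.
by apply: EB; split.
Qed.

End BasePoint.
End UniversalMap.

Section SGAmbit.
Variables (L : signature) (M : structure L) (m0 : M) (k : nat).
Variables (Gset : set ('I_k -> M)) (mul : Gty Gset -> Gty Gset -> Gty Gset).
Variable one : Gty Gset.
Variables (phiM : formula L) (cM : nat -> M).
Hypothesis mul_phiM : forall a b d : Gty Gset, mul a b = d <->
  sat (cat_env (sval a) (cat_env (sval b) (cat_env (sval d) cM))) phiM.
Hypothesis Gdef : definable Gset.
Hypothesis mulA : associative mul.
Hypothesis mul1g : left_id one mul.
Hypothesis mulVg : forall g, exists h, mul h g = one.

Local Notation act_SGE := (act_SGE m0 mul_phiM Gdef).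
Local Notation act_SG1 := (act_SG1 m0 mul_phiM Gdef mul1g).
Local Notation act_SGM := (act_SGM m0 mul_phiM Gdef mulA).

Lemma act_SG_continuous g : continuous (act_SG mul g).
Proof.
apply: (SG_continuous m0) => D Ddef.
exists (mul_preim mul g D); split; first exact: (mul_preim_definable m0 mul_phiM Gdef).
apply: funext => q; apply: propext; rewrite /stone_basic /preimage /= act_SGE shift_typeE.
by split=> [[]|].
Qed.

Lemma act_SG_bijective g : exists ginv : SG Gset -> SG Gset,
  [/\ continuous ginv, cancel (act_SG mul g) ginv & cancel ginv (act_SG mul g)].
Proof.
have [h hg] := mulVg g.
exists (act_SG mul h); split; first exact: act_SG_continuous.
  by move=> q; rewrite -act_SGM hg act_SG1.
by move=> q; rewrite -act_SGM (mul_linv_rinv mulA mul1g mulVg hg) act_SG1.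
Qed.

Lemma SG_orbit_dense (tp1_SG : is_SG Gset (tp (sval one))) :
  closure (range (fun g => act_SG mul g (mkSG tp1_SG))) = [set: SG Gset].
Proof.
rewrite eqEsubset; split => // q _ B qB.
have [E [Edef qE EB]] := nbhs_stone_basic m0 qB.
have [g Eg] := SG_ne qE.
have tpg := tp_SG m0 Gdef (svalP g).
exists (mkSG tpg); split; last by apply: EB.
by exists g => //; rewrite (act_SG_tp1 m0 mul_phiM Gdef mulA mul1g mulVg tp1_SG tpg).
Qed.

Hypothesis SG_definable_types : forall p : SG Gset, definable_type (sgval p).

Lemma SG_orbit_map_definable p : definable_map (fun g => act_SG mul g p).
Proof.
move=> C1 C2 C1closed C2closed C12.
have [D [Ddef C1D DC2]] := stone_basic_separate m0 Gdef C1closed C2closed C12.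
exists (fun a => exists Ga : Gset a, sgval p (mul_preim mul (exist _ a Ga) D)); split.
- exact: (definable_type_mul_preim m0 mul_phiM Gdef (SG_definable_types p)).
- by move=> a [].
- move=> g /C1D; rewrite /stone_basic act_SGE shift_typeE => -[_ pgD].
  by exists (svalP g); rewrite sig_eta.
- move=> g [Gg pgD] C2gp; rewrite sig_eta in pgD.
  suff : (stone_basic D `&` C2) (act_SG mul g p) by rewrite DC2.
  by split=> //; rewrite /stone_basic act_SGE shift_typeE.
Qed.

Lemma SG_definable_ambit (tp1_SG : is_SG Gset (tp (sval one))) :
  definable_ambit mul one (act_SG mul) (mkSG tp1_SG).
Proof.
split; last exact: SG_orbit_dense.
split; first by split; [exact: (SG_hausdorff m0)|exact: (SG_compact m0 Gdef)|exact: act_SG1].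
split; [exact: act_SGM| |exact: SG_orbit_map_definable].
by move=> g; split; [exact: act_SG_continuous|exact: act_SG_bijective].
Qed.

End SGAmbit.

Theorem proposition3p8 (L : signature) (M : structure L) (k : nat)
    (Gset : set ('I_k -> M)) (mul : Gty Gset -> Gty Gset -> Gty Gset)
    (one : Gty Gset) :
  is_definable_group mul one ->
  (forall p : SG Gset, definable_type (sgval p)) ->
  exists H : is_SG Gset (tp (sval one)),
    let tp1 : SG Gset := mkSG H in
    definable_ambit mul one (act_SG mul) tp1 /\
    forall (X : topologicalType) (act : Gty Gset -> X -> X) (x0 : X),
      definable_ambit mul one act x0 ->
      exists h : SG Gset -> X,
        [/\ continuous h,
            (forall g p, h (act_SG mul g p) = act g (h p)),
            h tp1 = x0,
            (forall x : X, exists p, h p = x) &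
            (forall h' : SG Gset -> X,
               continuous h' ->
               (forall g p, h' (act_SG mul g p) = act g (h' p)) ->
               h' tp1 = x0 -> h' = h)].
Proof.
move=> [Gdef [phiM [cM mul_phiM]] mulA mul1g mulVg] SG_definable_types.
(* [M] is inhabited: the parameters of the formula defining [G] provide a point. *)
have [_ [c _]] := Gdef; pose m0 := c 0.
have tp1_SG := tp_SG m0 Gdef (svalP one).
exists tp1_SG => tp1; split.
  exact: SG_definable_ambit.
move=> X act x0 [[[X_hausdorff X_compact act1] [actM act_homeo orbit_def]] orbit_dense].
have act_continuous g : continuous (act g) by case: (act_homeo g).
have orbit_map_definable := orbit_def x0.
exists (univ_map act x0); split.
- exact: univ_map_continuous.
- exact: (univ_map_equivariant m0 mul_phiM).
- exact: univ_map_tp1.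
- exact: (univ_map_surjective m0 mul_phiM).
- exact: (univ_map_unique m0 mul_phiM).
Qed.
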